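(* Let $h_1,\dots,h_{n-k}$ be the generators of a valid rate-$k/n$ quantum convolutional code, where $h_i=(h_{i,1}\,|\,h_{i,2}\,|\cdots|\,h_{i,l_i})$ and each $h_{i,j}$ is an $n$-qubit Pauli operator. Then there exist an integer $m\ge 0$ and $m$-qubit Pauli operators $g_{i,j}$ ($1\le i\le n-k$, $1\le j\le l_i-1$) such that the commutation relations among the input operators of the encoding transformation described in the context are consistent with those among the corresponding output operators; that is, for any two rows $(\mathrm{in}_1\to\mathrm{out}_1)$ and $(\mathrm{in}_2\to\mathrm{out}_2)$ of the transformation, $\mathrm{in}_1\odot\mathrm{in}_2=\mathrm{out}_1\odot\mathrm{out}_2$.
   Context: Pauli operators are considered up to phase. For two Pauli operators $A,B$ on the same qubits, $A\odot B\in\{0,1\}$ equals $1$ if $A$ and $B$ anticommute and $0$ if they commute; for tensor products it is additive modulo $2$ over the factors. A qubit stream is divided into frames of $n$ qubits. A rate-$k/n$ quantum convolutional code is specified by $n-k$ generators $h_1,\dots,h_{n-k}$, where $h_i=(h_{i,1}|\cdots|h_{i,l_i})$ is a finite sequence of $n$-qubit Pauli operators ($l_i\ge1$ is the degree of $h_i$), $h_{i,j}$ acting on the $j$-th frame; the other generators of the code are all shifts of these by integer numbers of frames. The code is valid if all generators and all their frame shifts pairwise commute, i.e. for all $i,i'$ and all integers $t$, $\sum_{r}h_{i,r+t}\odot h_{i',r}=0 \pmod 2$, where $h_{i,j}:=I^{\otimes n}$ for $j\notin\{1,\dots,l_i\}$. Encoding transformation: an encoder acts on $m$ memory qubits, $n-k$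 ancilla qubits and $k$ information qubits, and outputs $n$ physical qubits and $m$ memory qubits. With $s=n-k$, set $g_{i,0}:=g_{i,l_i}:=I^{\otimes m}$, let $A_{i,0}:=Z_i$ (Pauli $Z$ on the $i$-th ancilla qubit, identity on the other ancillas) and $A_{i,j}:=I^{\otimes(n-k)}$ for $j\ge1$. The transformation consists of the rows $g_{i,j}\otimes A_{i,j}\otimes I^{\otimes k}\ \longrightarrow\ h_{i,j+1}\otimes g_{i,j+1}$ for $1\le i\le n-k$, $0\le j\le l_i-1$, where the left side is an operator on (memory, ancilla, information) qubits and the right side an operator on (physical, memory) qubits. *)

From mathcomp Require Import all_boot all_order all_algebra.
Set Implicit Arguments. Unset Strict Implicit. Unset Printing Implicit Defensive.

(* Single-qubit Pauli operators, up to phase. *)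
Inductive pauli1 := PI | PX | PY | PZ.

Definition anti1 (a b : pauli1) : bool :=
  match a, b with
  | PI, _ | _, PI => false
  | PX, PX | PY, PY | PZ, PZ => false
  | _, _ => true
  end.

Definition Pauli (n : nat) := 'I_n -> pauli1.

Definition pid (n : nat) : Pauli n := fun _ => PI.
Arguments pid : clear implicits.

Definition odot (n : nat) (A B : Pauli n) : bool :=
  \big[addb/false]_(q < n) anti1 (A q) (B q).

Definition tensor (a b : nat) (A : Pauli a) (B : Pauli b) : Pauli (a + b) :=
  fun q => match split q with inl i => A i | inr j => B j end.

(* Generators: h i is the sequence (h_{i,1} | ... | h_{i,l_i}); l_i = size (h i).
   hz h i j = h_{i,j} for an integer frame index j, identity outside 1..l_i. *)
Definition hz (n s : nat) (h : 'I_s -> seq (Pauli n)) (i : 'I_s) (j : int) : Pauli n :=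
  match j with
  | Posz j' => if (1 <= j') && (j' <= size (h i)) then nth (pid n) (h i) j'.-1 else pid n
  | Negz _ => pid n
  end.

(* Validity: all generators and all their frame shifts pairwise commute:
   for all i, i', t : sum_r h_{i,r+t} ⊙ h_{i',r} = 0 mod 2.  Only r in 1..l_{i'}
   contributes, so the sum is taken over that range. *)
Definition valid_qcc (n s : nat) (h : 'I_s -> seq (Pauli n)) : Prop :=
  (forall i, 0 < size (h i)) /\
  forall (i i' : 'I_s) (t : int),
    \big[addb/false]_(r < size (h i'))
       odot (hz h i (r.+1%:Z + t)) (hz h i' r.+1%:Z) = false.

Definition gfull (n s m : nat) (h : 'I_s -> seq (Pauli n)) (g : 'I_s -> nat -> Pauli m)
  (i : 'I_s) (j : nat) : Pauli m :=
  if (j == 0) || (j == size (h i)) then pid m else g i j.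

Definition anc (s : nat) (i : 'I_s) (j : nat) : Pauli s :=
  fun q => if (j == 0) && (q == i) then PZ else PI.

(* Input of row (i,j): g_{i,j} ⊗ A_{i,j} ⊗ I^k on (memory, ancilla, information). *)
Definition enc_in (n k m : nat) (h : 'I_(n - k) -> seq (Pauli n))
  (g : 'I_(n - k) -> nat -> Pauli m) (i : 'I_(n - k)) (j : nat) : Pauli (m + (n - k) + k) :=
  tensor (tensor (gfull h g i j) (anc i j)) (pid k).

(* Output of row (i,j): h_{i,j+1} ⊗ g_{i,j+1} on (physical, memory). *)
Definition enc_out (n k m : nat) (h : 'I_(n - k) -> seq (Pauli n))
  (g : 'I_(n - k) -> nat -> Pauli m) (i : 'I_(n - k)) (j : nat) : Pauli (n + m) :=
  tensor (hz h i j.+1%:Z) (gfull h g i j.+1).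

From mathcomp Require Import all_boot all_order all_algebra.

Set Implicit Arguments.
Unset Strict Implicit.
Unset Printing Implicit Defensive.

(* Write c(i,j; i',j') for the tail sum of h_(i,j+r) ⊙ h_(i',j'+r) over r >= 1.
   The output relation of rows (i,j) and (i',j') is
   h_(i,j+1) ⊙ h_(i',j'+1) + c(i,j+1; i',j'+1) = c(i,j; i',j'), and the ancilla
   parts (Z's and identities) always commute, so it suffices to choose memory
   operators with g_(i,j) ⊙ g_(i',j') = c(i,j; i',j').  The conventions
   g_(i,0) = g_(i,l_i) = I are consistent with this, since c vanishes for
   j = l_i trivially and for j = 0 by validity of the code.  Finally, every
   symmetric commutation pattern with zero diagonal is realised by Pauli
   operators: give each anticommuting pair its own qubit, carrying X on one
   member and Z on the other. *)

Lemma anti1C a b : anti1 a b = anti1 b a.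
Proof. by case: a; case: b. Qed.

Lemma odotC n (A B : Pauli n) : odot A B = odot B A.
Proof. by apply: eq_bigr => q _; rewrite anti1C. Qed.

Lemma odot_pidl n (B : Pauli n) : odot (pid n) B = false.
Proof. exact: big1. Qed.

Lemma odot_pidr n (B : Pauli n) : odot B (pid n) = false.
Proof. by rewrite odotC odot_pidl. Qed.

Lemma odotxx n (B : Pauli n) : odot B B = false.
Proof. by apply: big1 => q _; case: (B q). Qed.

Lemma odot_tensor a b (A C : Pauli a) (B D : Pauli b) :
  odot (tensor A B) (tensor C D) = odot A C (+) odot B D.
Proof.
rewrite /odot big_split_ord /=; congr addb; apply: eq_bigr => q _; rewrite /tensor.
- by rewrite (unsplitK (inl q)).
- by rewrite (unsplitK (inr q)).
Qed.

Lemma odot_anc s (i1 i2 : 'I_s) j1 j2 : odot (anc i1 j1) (anc i2 j2) = false.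
Proof. by apply: big1 => q _; rewrite /anc; case: ifP; case: ifP. Qed.

Lemma odot_enum_val (T : finType) (A B : T -> pauli1) :
  odot (A \o @enum_val T T) (B \o @enum_val T T)
  = \big[addb/false]_(p : T) anti1 (A p) (B p).
Proof.
rewrite /odot (reindex (@enum_rank T)) /=; last first.
  by exists (@enum_val T T) => x _; rewrite ?enum_rankK ?enum_valK.
by apply: eq_bigr => p _; rewrite enum_rankK.
Qed.

Lemma big_ord_narrow_idx (R : Type) (idx : R) (op : Monoid.law idx) K L (F : nat -> R) :
  (K <= L)%N -> (forall r, (K <= r)%N -> F r = idx) ->
  \big[op/idx]_(r < L) F r = \big[op/idx]_(r < K) F r.
Proof.
move=> le_KL FK; rewrite [RHS](big_ord_widen L F le_KL) [RHS]big_mkcond /=.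
by apply: eq_bigr => r _; case: ltnP => // /FK ->.
Qed.

Section PauliRealization.
Variables (T : finType) (M : T -> T -> bool).
Hypothesis MC : forall c d, M c d = M d c.
Hypothesis Mxx : forall c, M c c = false.

Local Notation "c <T d" := (enum_rank c < enum_rank d)%N (at level 70).

Definition sorted_pair (c d : T) : T * T := if c <T d then (c, d) else (d, c).

Definition pair_pauli (c : T) (p : T * T) : pauli1 :=
  if (p.1 <T p.2) && M p.1 p.2 then
    if c == p.1 then PX else if c == p.2 then PZ else PI
  else PI.

Lemma anti1_pair_pauli c d p : c != d ->
  anti1 (pair_pauli c p) (pair_pauli d p) = (p == sorted_pair c d) && M c d.
Proof.
wlog lt_cd : c d / c <T d.
  move=> wlog_lt neq_cd.
  have [lt_cd|] := ltnP (enum_rank c) (enum_rank d); first exact: wlog_lt.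
  rewrite leq_eqVlt => /orP[/eqP/val_inj/enum_rank_inj eq_dc|lt_dc].
    by rewrite eq_dc eqxx in neq_cd.
  have neq_dc : d != c by rewrite eq_sym.
  rewrite anti1C (wlog_lt d c lt_dc neq_dc) MC /sorted_pair lt_dc.
  by rewrite ltnNge (ltnW lt_dc).
move=> neq_cd; rewrite /sorted_pair lt_cd; case: p => a b; rewrite /pair_pauli /=.
have [[-> ->]|neq_p] := eqVneq (a, b) (c, d).
  by rewrite lt_cd eqxx eq_sym (negbTE neq_cd) eqxx; case: (M c d).
case: ifP => // /andP[lt_ab _].
have neq_dc : d != c by rewrite eq_sym.
have [Eca|neq_ca] := eqVneq c a.
  rewrite -Eca in neq_p *; rewrite (negbTE neq_dc).
  have [Edb|] := eqVneq d b; last by [].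
  by rewrite Edb eqxx in neq_p.
have [Ecb|neq_cb] := eqVneq c b; last by [].
rewrite -Ecb (negbTE neq_dc); case: eqP => // Eda.
by move: lt_ab; rewrite -Eda -Ecb ltnNge (ltnW lt_cd).
Qed.

Lemma pauli_realization :
  exists m (G : T -> Pauli m), forall c d, odot (G c) (G d) = M c d.
Proof.
exists #|{: T * T}|, (fun c => pair_pauli c \o enum_val) => c d.
have [<-|neq_cd] := eqVneq c d; first by rewrite odotxx Mxx.
rewrite odot_enum_val.
under eq_bigr do rewrite anti1_pair_pauli //.
by rewrite -big_mkcondr /= big_pred1_eq.
Qed.

End PauliRealization.

Section TailOdot.
Variables (n s : nat) (h : 'I_s -> seq (Pauli n)).

Definition max_size := (\max_(i < s) size (h i))%N.

Lemma size_le_max_size i : (size (h i) <= max_size)%N.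
Proof. exact: (leq_bigmax (F := fun i => size (h i))). Qed.

Lemma hz_gt_size i j : (size (h i) < j)%N -> hz h i j%:Z = pid n.
Proof. by move=> lt_size; rewrite /hz (leqNgt j) lt_size andbF. Qed.

(* All terms with r >= max_size vanish, so this is the tail sum over all r >= 1. *)
Definition tail_odot i1 j1 i2 j2 : bool :=
  \big[addb/false]_(r < max_size.+1)
    odot (hz h i1 (j1 + r.+1)%:Z) (hz h i2 (j2 + r.+1)%:Z).

Lemma tail_odotC i1 j1 i2 j2 : tail_odot i1 j1 i2 j2 = tail_odot i2 j2 i1 j1.
Proof. by apply: eq_bigr => r _; rewrite odotC. Qed.

Lemma tail_odotxx i j : tail_odot i j i j = false.
Proof. by apply: big1 => r _; rewrite odotxx. Qed.

Lemma tail_odot_size i1 j1 i2 j2 : (size (h i1) <= j1)%N -> tail_odot i1 j1 i2 j2 = false.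
Proof.
move=> le_size; apply: big1 => r _; rewrite hz_gt_size ?odot_pidl //.
by rewrite addnS ltnS (leq_trans le_size) ?leq_addr.
Qed.

Lemma tail_odotS i1 j1 i2 j2 : tail_odot i1 j1 i2 j2 =
  odot (hz h i1 j1.+1%:Z) (hz h i2 j2.+1%:Z) (+) tail_odot i1 j1.+1 i2 j2.+1.
Proof.
have last_term : odot (hz h i1 (j1.+1 + max_size.+1)%:Z)
                      (hz h i2 (j2.+1 + max_size.+1)%:Z) = false.
  by rewrite hz_gt_size ?odot_pidl // ltn_addl // ltnS size_le_max_size.
rewrite /tail_odot big_ord_recl big_ord_recr last_term Monoid.mulm1 !addn1.
by congr addb; apply: eq_bigr => r _; rewrite !addSnnS.
Qed.

Lemma tail_odot0 i1 i2 j2 : valid_qcc h -> tail_odot i1 0 i2 j2 = false.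
Proof.
case=> _ /(_ i2 i1 j2) <-; rewrite /tail_odot.
rewrite (@big_ord_narrow_idx _ _ _ (size (h i1)) _
  (fun r => odot (hz h i1 (0 + r.+1)%:Z) (hz h i2 (j2 + r.+1)%:Z))).
- by apply: eq_bigr => r _; rewrite add0n odotC addnC.
- by rewrite ltnW // ltnS size_le_max_size.
- by move=> r le_size; rewrite hz_gt_size ?odot_pidl.
Qed.

End TailOdot.

Section MemoryOperators.
Variables (n s m : nat) (h : 'I_s -> seq (Pauli n)).
Hypothesis h_valid : valid_qcc h.
Variable G : 'I_s * 'I_(max_size h).+1 -> Pauli m.
Hypothesis odot_G : forall x y, odot (G x) (G y) = tail_odot h x.1 x.2 y.1 y.2.

Definition memory_ops (i : 'I_s) (j : nat) : Pauli m := G (i, inord j).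

Lemma odot_gfull i1 j1 i2 j2 : (j1 <= size (h i1))%N -> (j2 <= size (h i2))%N ->
  odot (gfull h memory_ops i1 j1) (gfull h memory_ops i2 j2) = tail_odot h i1 j1 i2 j2.
Proof.
move=> le_j1 le_j2; rewrite /gfull.
have bound i j : (j <= size (h i))%N -> (j < (max_size h).+1)%N.
  by move=> le_j; rewrite ltnS (leq_trans le_j) ?size_le_max_size.
have [/orP[/eqP->|/eqP E1]|_] := boolP ((j1 == 0) || (j1 == size (h i1))).
- by rewrite odot_pidl tail_odot0.
- by rewrite odot_pidl tail_odot_size // E1.
have [/orP[/eqP->|/eqP E2]|_] := boolP ((j2 == 0) || (j2 == size (h i2))).
- by rewrite odot_pidr tail_odotC tail_odot0.
- by rewrite odot_pidr tail_odotC tail_odot_size // E2.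
by rewrite odot_G /= (inordK (bound _ _ le_j1)) (inordK (bound _ _ le_j2)).
Qed.

End MemoryOperators.

Theorem theorem1 (n k : nat) (h : 'I_(n - k) -> seq (Pauli n)) :
  (k <= n)%N ->
  valid_qcc h ->
  exists (m : nat) (g : 'I_(n - k) -> nat -> Pauli m),
    forall (i1 i2 : 'I_(n - k)) (j1 j2 : nat),
      (j1 < size (h i1))%N -> (j2 < size (h i2))%N ->
      odot (enc_in h g i1 j1) (enc_in h g i2 j2)
      = odot (enc_out h g i1 j1) (enc_out h g i2 j2).
Proof.
move=> _ h_valid.
have [m [G odot_G]] := @pauli_realization _
  (fun x y : 'I_(n - k) * 'I_(max_size h).+1 => tail_odot h x.1 x.2 y.1 y.2)
  (fun x y => tail_odotC h _ _ _ _) (fun x => tail_odotxx h _ _).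
exists m, (memory_ops G) => i1 i2 j1 j2 lt_j1 lt_j2.
rewrite /enc_in /enc_out !odot_tensor odot_anc odot_pidl !addbF.
rewrite !(odot_gfull h_valid odot_G) ?(ltnW lt_j1) ?(ltnW lt_j2) //.
exact: tail_odotS.
Qed.
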